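(* Let $M$ be a connected two-dimensional manifold and $f:M\to\mathbb{R}^{0,2,1}$ a non-degenerate immersion. Suppose there is $\lambda\in C^\infty(M)$ with $h=\lambda g$, and suppose $f$ is not $d$-totally geodesic, i.e. $h\not\equiv0$. Then $\lambda$ is a nonzero constant. Moreover, there are constants $A,B,C\in\mathbb{R}$ such that $f(M)$ is an open subset of the paraboloid of revolution $$\left\{\left(u,v,\tfrac{\lambda}{2}(u^2+v^2)+Au+Bv+C\right)\ :\ (u,v)\in\mathbb{R}^2\right\}.$$ In particular, up to an affine isometry of $\mathbb{R}^{0,2,1}$, $f(M)$ is an open subset of $\{(u,v,u^2+v^2):(u,v)\in\mathbb{R}^2\}$.
   Context: $\mathbb{R}^{0,2,1}$ denotes $\mathbb{R}^3$ with coordinates $(x,y,z)$ and the degenerate form $(\cdot,\cdot)=dx^2+dy^2$. A non-degenerate immersion is a $C^\infty$ immersion $f:M\to\mathbb{R}^{0,2,1}$ of a 2-manifold whose induced metric $g=f^*(\cdot,\cdot)$ is positive definite. Let $\xi=(0,0,1)$ and let $d$ be the standard flat connection of $\mathbb{R}^3$ (componentwise differentiation). Since $\mathbb{R}^3=df(T_pM)\oplus\mathbb{R}\xi$, one can decompose $d_X(df(Y))=df(\nabla_XY)+h(X,Y)\xi$, where $\nabla$ is the Levi-Civita connection of $g$ and $h$ is a symmetric $(0,2)$-tensor called the second fundamental form. $f$ is $d$-totally geodesic if $h\equiv0$. An affine isometry of $\mathbb{R}^{0,2,1}$ is a map $p\mapsto Pp+b$ with $b\in\mathbb{R}^3$ and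 $P=\begin{pmatrix}T&0\\ (a\ \ b')&c\end{pmatrix}$, where $T\in O(2)$, $a,b',c\in\mathbb{R}$ and $c\neq0$. *)

From Stdlib Require Import Reals List.
Open Scope R_scope.

Definition R2 : Type := (R * R)%type.
Definition dist2 (p q : R2) : R :=
  Rmax (Rabs (fst p - fst q)) (Rabs (snd p - snd q)).
Definition open2 (U : R2 -> Prop) : Prop :=
  forall p, U p -> exists e, 0 < e /\ forall q, dist2 q p < e -> U q.
Definition cont2_on (U : R2 -> Prop) (F : R2 -> R) : Prop :=
  forall p, U p -> forall e, 0 < e -> exists d, 0 < d /\
    forall q, U q -> dist2 q p < d -> Rabs (F q - F p) < e.
Definition pd1_on (U : R2 -> Prop) (F G : R2 -> R) : Prop :=
  forall x y, U (x, y) -> derivable_pt_lim (fun t => F (t, y)) x (G (x, y)).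
Definition pd2_on (U : R2 -> Prop) (F G : R2 -> R) : Prop :=
  forall x y, U (x, y) -> derivable_pt_lim (fun t => F (x, t)) y (G (x, y)).

(** [derivs U F D]: D l is the iterated partial derivative of F indexed by l
    (false = d/du, true = d/dv; D (a :: l) = d_a (D l)); all exist and are
    continuous on U.  So D [a;b] = d_a d_b F. *)
Definition derivs (U : R2 -> Prop) (F : R2 -> R) (D : list bool -> R2 -> R) : Prop :=
  (forall p, U p -> D nil p = F p) /\
  forall l, pd1_on U (D l) (D (false :: l)) /\ pd2_on U (D l) (D (true :: l))
            /\ cont2_on U (D l).
Definition smooth_on (U : R2 -> Prop) (F : R2 -> R) : Prop := exists D, derivs U F D.

(** * Smooth 2-manifolds given by a smooth atlas (charts are parametrizations
      chart i : cdom i -> M).  Topology: final topology of the charts. *)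
Record surface := {
  pt : Type;
  cidx : Type;
  cdom : cidx -> R2 -> Prop;
  chart : cidx -> R2 -> pt;
  cdom_open : forall i, open2 (cdom i);
  chart_inj : forall i p q, cdom i p -> cdom i q -> chart i p = chart i q -> p = q;
  chart_cover : forall m, exists i p, cdom i p /\ chart i p = m;
  trans_open : forall i j,
    open2 (fun p => cdom i p /\ exists q, cdom j q /\ chart j q = chart i p);
  trans_smooth : forall i j, exists t1 t2 : R2 -> R,
    (forall p, cdom i p -> (exists q, cdom j q /\ chart j q = chart i p) ->
       cdom j (t1 p, t2 p) /\ chart j (t1 p, t2 p) = chart i p) /\
    smooth_on (fun p => cdom i p /\ exists q, cdom j q /\ chart j q = chart i p) t1 /\
    smooth_on (fun p => cdom i p /\ exists q, cdom j q /\ chart j q = chart i p) t2;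
  surf_hausdorff : forall m1 m2 : pt, m1 <> m2 -> exists O1 O2 : pt -> Prop,
    (forall i, open2 (fun p => cdom i p /\ O1 (chart i p))) /\
    (forall i, open2 (fun p => cdom i p /\ O2 (chart i p))) /\
    O1 m1 /\ O2 m2 /\ (forall m, ~ (O1 m /\ O2 m));
  surf_countable : exists e : nat -> cidx,
    forall m, exists n p, cdom (e n) p /\ chart (e n) p = m
}.

Definition sopen (S : surface) (O : pt S -> Prop) : Prop :=
  forall i, open2 (fun p => cdom S i p /\ O (chart S i p)).

Definition connected (S : surface) : Prop :=
  forall O1 O2 : pt S -> Prop, sopen S O1 -> sopen S O2 ->
    (forall m, O1 m \/ O2 m) -> (forall m, ~ (O1 m /\ O2 m)) ->
    (forall m, O1 m) \/ (forall m, O2 m).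

Definition smoothM (S : surface) (F : pt S -> R) : Prop :=
  forall i, smooth_on (cdom S i) (fun p => F (chart S i p)).

Record R3 := mk3 { x3 : R; y3 : R; z3 : R }.
Definition dist3 (p q : R3) : R :=
  Rmax (Rabs (x3 p - x3 q)) (Rmax (Rabs (y3 p - y3 q)) (Rabs (z3 p - z3 q))).

Definition chart_derivs (S : surface) (f : pt S -> R3) (i : cidx S)
  (D1 D2 D3 : list bool -> R2 -> R) : Prop :=
  derivs (cdom S i) (fun p => x3 (f (chart S i p))) D1 /\
  derivs (cdom S i) (fun p => y3 (f (chart S i p))) D2 /\
  derivs (cdom S i) (fun p => z3 (f (chart S i p))) D3.

(** induced metric g = f^*(dx^2+dy^2) in the chart, g(d_a, d_b) *)
Definition gcoef (D1 D2 : list bool -> R2 -> R) (a b : bool) (p : R2) : R :=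
  D1 (a :: nil) p * D1 (b :: nil) p + D2 (a :: nil) p * D2 (b :: nil) p.

Definition nondeg_immersion (S : surface) (f : pt S -> R3) : Prop :=
  (forall i, exists D1 D2 D3, chart_derivs S f i D1 D2 D3) /\
  forall i D1 D2 D3, chart_derivs S f i D1 D2 D3 -> forall p, cdom S i p ->
    forall s t : R, (s, t) <> (0, 0) ->
      mk3 (s * D1 (false :: nil) p + t * D1 (true :: nil) p)
          (s * D2 (false :: nil) p + t * D2 (true :: nil) p)
          (s * D3 (false :: nil) p + t * D3 (true :: nil) p) <> mk3 0 0 0 /\
      0 < s * s * gcoef D1 D2 false false p + 2 * s * t * gcoef D1 D2 false true p
          + t * t * gcoef D1 D2 true true p.

(** [hcoef_is ... a b c]: in the decomposition
      d_{d_a}(df(d_b)) = df(nabla_{d_a} d_b) + h(d_a,d_b) xi,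
    with xi = (0,0,1), the xi-component h(d_a,d_b) at p equals c. *)
Definition hcoef_is (D1 D2 D3 : list bool -> R2 -> R) (p : R2) (a b : bool) (c : R)
  : Prop :=
  exists c1 c2 : R,
    D1 (a :: b :: nil) p = c1 * D1 (false :: nil) p + c2 * D1 (true :: nil) p /\
    D2 (a :: b :: nil) p = c1 * D2 (false :: nil) p + c2 * D2 (true :: nil) p /\
    D3 (a :: b :: nil) p = c1 * D3 (false :: nil) p + c2 * D3 (true :: nil) p + c.

Definition h_eq_lam_g (S : surface) (f : pt S -> R3) (lam : pt S -> R) : Prop :=
  forall i D1 D2 D3, chart_derivs S f i D1 D2 D3 -> forall p, cdom S i p ->
    forall a b, hcoef_is D1 D2 D3 p a b (lam (chart S i p) * gcoef D1 D2 a b p).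

Definition d_totally_geodesic (S : surface) (f : pt S -> R3) : Prop :=
  forall i D1 D2 D3, chart_derivs S f i D1 D2 D3 -> forall p, cdom S i p ->
    forall a b, hcoef_is D1 D2 D3 p a b 0.

Definition image_open_in (S : surface) (P : R3 -> Prop) (f : pt S -> R3) : Prop :=
  (forall m, P (f m)) /\
  forall m, exists e, 0 < e /\ forall q, P q -> dist3 q (f m) < e -> exists m', f m' = q.

Definition paraboloid (lam A B C : R) (q : R3) : Prop :=
  z3 q = lam / 2 * (x3 q ^ 2 + y3 q ^ 2) + A * x3 q + B * y3 q + C.

Definition std_paraboloid (q : R3) : Prop := z3 q = x3 q ^ 2 + y3 q ^ 2.

Definition affine_isometry (T : R3 -> R3) : Prop :=
  exists t11 t12 t21 t22 a b' c b1 b2 b3 : R,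
    t11 * t11 + t21 * t21 = 1 /\ t12 * t12 + t22 * t22 = 1 /\
    t11 * t12 + t21 * t22 = 0 /\ c <> 0 /\
    forall p, T p = mk3 (t11 * x3 p + t12 * y3 p + b1)
                        (t21 * x3 p + t22 * y3 p + b2)
                        (a * x3 p + b' * y3 p + c * z3 p + b3).

From Stdlib Require Import Reals List Lra Psatz Classical.
From Coquelicot Require Coquelicot.
Open Scope R_scope.

(* In a chart, positive definiteness of g makes (x, y) o f a local diffeomorphism, so
   dz = P dx + Q dy.  Reading the decomposition of d(df) along xi, the condition h = lam g
   says exactly dP = lam dx and dQ = lam dy.  Symmetry of the second derivatives of P and Q
   then gives dlam /\ dx = dlam /\ dy = 0, so dlam = 0: lam is locally constant, hence
   constant on the connected M, and nonzero because h does not vanish identically.  Then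
   P - lam x, Q - lam y and finally z - lam (x^2 + y^2) / 2 - A x - B y are locally
   constant, so f(M) lies locally on paraboloids whose coefficients are determined by any
   open piece of surface; connectedness glues them into one.  Openness of f(M) in the
   paraboloid is the inverse function theorem for (x, y) o f, proved by a contraction
   argument, and completing the square gives the normal form. *)

Lemma Rabs_le_inv x r : Rabs x <= r -> - r <= x <= r.
Proof. unfold Rabs; destruct (Rcase_abs x); lra. Qed.

Lemma Rabs_between a b c r t :
  Rabs (a - c) <= r -> Rabs (b - c) <= r -> Rmin a b <= t <= Rmax a b -> Rabs (t - c) <= r.
Proof.
  intros Ha Hb Ht. apply Rabs_le. apply Rabs_le_inv in Ha. apply Rabs_le_inv in Hb.
  unfold Rmin, Rmax in Ht. destruct (Rle_dec a b); lra.
Qed.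

Lemma Rabs_comb_le a1 a2 d1 d2 eta :
  Rabs d1 < eta -> Rabs d2 < eta -> Rabs (a1 * d1 + a2 * d2) <= (Rabs a1 + Rabs a2) * eta.
Proof.
  intros H1 H2. eapply Rle_trans; [apply Rabs_triang|]. rewrite !Rabs_mult.
  pose proof (Rabs_pos a1); pose proof (Rabs_pos a2).
  assert (Rabs a1 * Rabs d1 <= Rabs a1 * eta) by (apply Rmult_le_compat_l; lra).
  assert (Rabs a2 * Rabs d2 <= Rabs a2 * eta) by (apply Rmult_le_compat_l; lra).
  lra.
Qed.

Lemma det2_kernel a b c d s t :
  a * d - b * c <> 0 -> a * s + b * t = 0 -> c * s + d * t = 0 -> s = 0 /\ t = 0.
Proof.
  intros Hdet H1 H2.
  assert (Es : s * (a * d - b * c) = 0)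
    by (replace (s * (a * d - b * c)) with (d * (a * s + b * t) - b * (c * s + d * t)) by ring;
        rewrite H1, H2; ring).
  assert (Et : t * (a * d - b * c) = 0)
    by (replace (t * (a * d - b * c)) with (a * (c * s + d * t) - c * (a * s + b * t)) by ring;
        rewrite H1, H2; ring).
  destruct (Rmult_integral _ _ Es), (Rmult_integral _ _ Et); tauto.
Qed.

Lemma dist2_fst p q : Rabs (fst q - fst p) <= dist2 q p.
Proof. apply Rmax_l. Qed.

Lemma dist2_snd p q : Rabs (snd q - snd p) <= dist2 q p.
Proof. apply Rmax_r. Qed.

Lemma dist2_le p q r : Rabs (fst q - fst p) <= r -> Rabs (snd q - snd p) <= r -> dist2 q p <= r.
Proof. apply Rmax_lub. Qed.

Lemma dist2_lt p q r : Rabs (fst q - fst p) < r -> Rabs (snd q - snd p) < r -> dist2 q p < r.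
Proof. apply Rmax_lub_lt. Qed.

Lemma dist2_ge0 p q : 0 <= dist2 q p.
Proof. eapply Rle_trans; [apply Rabs_pos | apply dist2_fst]. Qed.

Lemma dist2_sym p q : dist2 q p = dist2 p q.
Proof. unfold dist2; rewrite (Rabs_minus_sym (fst q)), (Rabs_minus_sym (snd q)); reflexivity. Qed.

Lemma dist2_refl p : dist2 p p = 0.
Proof. unfold dist2; rewrite !Rminus_diag, Rabs_R0; apply Rmax_left; lra. Qed.

Lemma dist2_triangle p q r : dist2 p r <= dist2 p q + dist2 q r.
Proof.
  pose proof (dist2_fst q p); pose proof (dist2_fst r q).
  pose proof (dist2_snd q p); pose proof (dist2_snd r q).
  pose proof (Rabs_triang (fst p - fst q) (fst q - fst r)).
  pose proof (Rabs_triang (snd p - snd q) (snd q - snd r)).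
  apply dist2_le.
  - replace (fst p - fst q + (fst q - fst r)) with (fst p - fst r) in * by ring. lra.
  - replace (snd p - snd q + (snd q - snd r)) with (snd p - snd r) in * by ring. lra.
Qed.

Lemma dist2_eq0 p q : dist2 q p <= 0 -> q = p.
Proof.
  intros H. pose proof (dist2_fst p q) as H1. pose proof (dist2_snd p q) as H2.
  destruct q as [q1 q2], p as [p1 p2]; simpl in *.
  apply Rabs_le_inv in H1. apply Rabs_le_inv in H2.
  f_equal; lra.
Qed.

Definition coord (a : bool) (p : R2) : R := if a then snd p else fst p.

Definition set_coord (a : bool) (p : R2) (t : R) : R2 := if a then (fst p, t) else (t, snd p).

Lemma set_coord_id a p : set_coord a p (coord a p) = p.
Proof. destruct a, p; reflexivity. Qed.

Lemma coord_set_coord a p t : coord a (set_coord a p t) = t.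
Proof. destruct a; reflexivity. Qed.

Lemma dist2_set_coord a p t : dist2 (set_coord a p t) p = Rabs (t - coord a p).
Proof.
  destruct a, p as [x y]; unfold dist2; simpl; rewrite Rminus_diag, Rabs_R0;
    [apply Rmax_right | apply Rmax_left]; apply Rabs_pos.
Qed.

Lemma box_segment p r a z t s :
  dist2 z p <= r -> dist2 (set_coord a z t) p <= r ->
  Rmin (coord a z) t <= s <= Rmax (coord a z) t -> dist2 (set_coord a z s) p <= r.
Proof.
  intros Hz Ht Hs.
  pose proof (dist2_fst p z); pose proof (dist2_snd p z).
  pose proof (dist2_fst p (set_coord a z t)); pose proof (dist2_snd p (set_coord a z t)).
  destruct a, z as [z1 z2]; simpl in *; apply dist2_le; simpl;
    first [lra | eapply Rabs_between; [| | exact Hs]; lra].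
Qed.

Lemma open_set_coord_near U a p :
  open2 U -> U p -> exists d, 0 < d /\ forall t, Rabs (t - coord a p) < d -> U (set_coord a p t).
Proof.
  intros HU Hp. destruct (HU p Hp) as [e [He Hball]].
  exists e; split; [exact He|]. intros t Ht. apply Hball. rewrite dist2_set_coord. exact Ht.
Qed.

(* Restatements of the Stdlib rules with the functions eta-expanded, so that
   [apply] unifies them with derivatives of explicit expressions. *)
Lemma dpl_eq f x l l' : derivable_pt_lim f x l -> l = l' -> derivable_pt_lim f x l'.
Proof. intros H <-; exact H. Qed.

Lemma dpl_const c x : derivable_pt_lim (fun _ => c) x 0.
Proof. exact (derivable_pt_lim_const c x). Qed.

Lemma dpl_id x : derivable_pt_lim (fun t => t) x 1.
Proof. exact (derivable_pt_lim_id x). Qed.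

Lemma dpl_plus f g x a b :
  derivable_pt_lim f x a -> derivable_pt_lim g x b -> derivable_pt_lim (fun t => f t + g t) x (a + b).
Proof. exact (derivable_pt_lim_plus f g x a b). Qed.

Lemma dpl_minus f g x a b :
  derivable_pt_lim f x a -> derivable_pt_lim g x b -> derivable_pt_lim (fun t => f t - g t) x (a - b).
Proof. exact (derivable_pt_lim_minus f g x a b). Qed.

Lemma dpl_mult f g x a b :
  derivable_pt_lim f x a -> derivable_pt_lim g x b ->
  derivable_pt_lim (fun t => f t * g t) x (a * g x + f x * b).
Proof. exact (derivable_pt_lim_mult f g x a b). Qed.

Lemma dpl_scal c f x a : derivable_pt_lim f x a -> derivable_pt_lim (fun t => c * f t) x (c * a).
Proof. exact (derivable_pt_lim_scal f c x a). Qed.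

Lemma dpl_div f g x a b :
  derivable_pt_lim f x a -> derivable_pt_lim g x b -> g x <> 0 ->
  derivable_pt_lim (fun t => f t / g t) x ((a * g x - b * f x) / (g x)²).
Proof. exact (derivable_pt_lim_div f g x a b). Qed.

Lemma dpl_minus_const f c x a : derivable_pt_lim f x a -> derivable_pt_lim (fun t => f t - c) x a.
Proof. intros H. eapply dpl_eq; [apply dpl_minus; [exact H | apply dpl_const] | ring]. Qed.

Lemma dpl_loc_ext f g x l :
  derivable_pt_lim f x l -> (exists d, 0 < d /\ forall t, Rabs (t - x) < d -> f t = g t) ->
  derivable_pt_lim g x l.
Proof.
  intros H [d [Hd E]] eps He. destruct (H eps He) as [del Hdel].
  assert (Hm : 0 < Rmin del d) by (apply Rmin_pos; [apply cond_pos | exact Hd]).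
  exists (mkposreal _ Hm). intros h Hh0 Hh. simpl in Hh.
  pose proof (Rmin_l del d); pose proof (Rmin_r del d).
  rewrite <- (E (x + h)), <- (E x).
  - apply Hdel; [exact Hh0 | lra].
  - rewrite Rminus_diag, Rabs_R0; exact Hd.
  - replace (x + h - x) with h by ring; lra.
Qed.

Definition partial_on (U : R2 -> Prop) (a : bool) (F G : R2 -> R) : Prop :=
  forall p, U p -> derivable_pt_lim (fun t => F (set_coord a p t)) (coord a p) (G p).

Lemma partial_on_mult U a F G F' G' :
  partial_on U a F F' -> partial_on U a G G' ->
  partial_on U a (fun q => F q * G q) (fun q => F' q * G q + F q * G' q).
Proof.
  intros HF HG p Hp. eapply dpl_eq; [apply dpl_mult; [apply HF | apply HG]; exact Hp|].
  cbv beta. rewrite set_coord_id. ring.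
Qed.

Lemma coord_set_coord_derivable k a z :
  derivable_pt_lim (fun t => coord k (set_coord a z t)) (coord a z) (if Bool.eqb a k then 1 else 0).
Proof. destruct a, k; simpl; first [apply dpl_id | apply dpl_const]. Qed.

Lemma mvt_bound (g g' : R -> R) a b M :
  (forall t, Rmin a b <= t <= Rmax a b -> derivable_pt_lim g t (g' t)) ->
  (forall t, Rmin a b <= t <= Rmax a b -> Rabs (g' t) <= M) ->
  Rabs (g b - g a) <= M * Rabs (b - a).
Proof.
  intros Hd HM. destruct (MVT_abs g g' a b Hd) as [c [-> Hc]].
  apply Rmult_le_compat_r; [apply Rabs_pos | exact (HM c Hc)].
Qed.

Lemma box_lipschitz (phi : R2 -> R) (phi' : bool -> R2 -> R) p r M :
  (forall a, partial_on (fun z => dist2 z p <= r) a phi (phi' a)) ->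
  (forall a z, dist2 z p <= r -> Rabs (phi' a z) <= M) ->
  forall q q', dist2 q p <= r -> dist2 q' p <= r -> Rabs (phi q' - phi q) <= 2 * M * dist2 q' q.
Proof.
  intros Hd HM.
  assert (Hseg : forall a z t, dist2 z p <= r -> dist2 (set_coord a z t) p <= r ->
            Rabs (phi (set_coord a z t) - phi z) <= M * Rabs (t - coord a z)).
  { intros a z t Hz Ht.
    replace (phi z) with (phi (set_coord a z (coord a z))) by (rewrite set_coord_id; reflexivity).
    apply (mvt_bound (fun s => phi (set_coord a z s)) (fun s => phi' a (set_coord a z s)));
      intros s Hs; pose proof (box_segment p r a z t s Hz Ht Hs) as Hbox.
    - pose proof (Hd a _ Hbox) as D.
      replace (fun t => phi (set_coord a (set_coord a z s) t)) with (fun t => phi (set_coord a z t))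
        in D by (destruct a; reflexivity).
      rewrite coord_set_coord in D. exact D.
    - exact (HM a _ Hbox). }
  intros [q1 q2] [q1' q2'] Hq Hq'.
  assert (Hm : dist2 (q1', q2) p <= r).
  { pose proof (dist2_fst p (q1', q2')); pose proof (dist2_snd p (q1, q2)).
    apply dist2_le; simpl in *; lra. }
  pose proof (Hseg false (q1, q2) q1' Hq Hm) as S1.
  pose proof (Hseg true (q1', q2) q2' Hm Hq') as S2.
  simpl in S1, S2.
  assert (HM0 : 0 <= M).
  { pose proof (Rabs_pos (phi' true (q1, q2))). pose proof (HM true (q1, q2) Hq). lra. }
  pose proof (dist2_fst (q1, q2) (q1', q2')); pose proof (dist2_snd (q1, q2) (q1', q2')).
  simpl in *.
  pose proof (Rabs_triang (phi (q1', q2') - phi (q1', q2)) (phi (q1', q2) - phi (q1, q2))).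
  replace (phi (q1', q2') - phi (q1', q2) + (phi (q1', q2) - phi (q1, q2)))
    with (phi (q1', q2') - phi (q1, q2)) in * by ring.
  nra.
Qed.

Lemma const_of_partials_zero (phi : R2 -> R) p e :
  (forall a, partial_on (fun z => dist2 z p < e) a phi (fun _ => 0)) ->
  forall q, dist2 q p < e -> phi q = phi p.
Proof.
  intros H q Hq.
  assert (Hb : Rabs (phi q - phi p) <= 2 * 0 * dist2 q p).
  { apply (box_lipschitz phi (fun _ _ => 0) p (dist2 q p)).
    - intros a z Hz. apply H. lra.
    - intros. rewrite Rabs_R0. lra.
    - rewrite dist2_refl. apply dist2_ge0.
    - lra. }
  apply Rabs_le_inv in Hb. lra.
Qed.

Lemma geometric_cauchy (u : nat -> R2) C :
  (forall n, dist2 (u (S n)) (u n) <= C * (/ 2) ^ n) ->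
  forall eps, 0 < eps ->
  exists N, forall n m, (N <= n)%nat -> (N <= m)%nat -> dist2 (u m) (u n) < eps.
Proof.
  intros Hstep eps Heps.
  assert (HC : 0 <= C).
  { pose proof (Hstep O); pose proof (dist2_ge0 (u O) (u 1%nat)). simpl in *. lra. }
  assert (Htail : forall n k, dist2 (u (n + k)%nat) (u n) <= 2 * C * (/ 2) ^ n).
  { intros n k.
    enough (dist2 (u (n + k)%nat) (u n) <= 2 * C * (/ 2) ^ n - 2 * C * (/ 2) ^ (n + k))
      by (pose proof (pow_le (/ 2) (n + k) ltac:(lra)); nra).
    induction k.
    - rewrite Nat.add_0_r, dist2_refl. lra.
    - replace (n + S k)%nat with (S (n + k)) by lia.
      pose proof (dist2_triangle (u (S (n + k))) (u (n + k)%nat) (u n)).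
      pose proof (Hstep (n + k)%nat). simpl pow at 2. lra. }
  assert (Hq : 0 < eps / (2 * C + 1)) by (apply Rdiv_lt_0_compat; lra).
  destruct (pow_lt_1_zero (/ 2) ltac:(rewrite Rabs_right; lra) _ Hq) as [N HN].
  assert (Hle : forall n m, (N <= n)%nat -> (n <= m)%nat -> dist2 (u m) (u n) < eps).
  { intros n m Hn Hm. replace m with (n + (m - n))%nat by lia.
    eapply Rle_lt_trans; [apply Htail|].
    specialize (HN n Hn). rewrite Rabs_right in HN by (apply Rle_ge, pow_le; lra).
    assert (E : eps / (2 * C + 1) * (2 * C + 1) = eps) by (field; lra).
    pose proof (pow_le (/ 2) n ltac:(lra)). nra. }
  exists N. intros n m Hn Hm. destruct (Nat.le_ge_cases n m).
  - apply Hle; lia.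
  - rewrite dist2_sym. apply Hle; lia.
Qed.

Lemma cauchy2_cv (u : nat -> R2) :
  (forall eps, 0 < eps ->
     exists N, forall n m, (N <= n)%nat -> (N <= m)%nat -> dist2 (u m) (u n) < eps) ->
  exists l, forall eps, 0 < eps -> exists N, forall n, (N <= n)%nat -> dist2 (u n) l < eps.
Proof.
  intros H.
  assert (C1 : Cauchy_crit (fun n => fst (u n))).
  { intros eps He. destruct (H eps He) as [N HN]. exists N. intros n m Hn Hm.
    eapply Rle_lt_trans; [apply dist2_fst | apply HN; assumption]. }
  assert (C2 : Cauchy_crit (fun n => snd (u n))).
  { intros eps He. destruct (H eps He) as [N HN]. exists N. intros n m Hn Hm.
    eapply Rle_lt_trans; [apply dist2_snd | apply HN; assumption]. }
  destruct (R_complete _ C1) as [l1 H1]. destruct (R_complete _ C2) as [l2 H2].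
  exists (l1, l2). intros eps He.
  destruct (H1 eps He) as [N1 HN1]. destruct (H2 eps He) as [N2 HN2].
  exists (max N1 N2). intros n Hn. apply dist2_lt; [apply HN1 | apply HN2]; lia.
Qed.

Lemma box_contraction_fixpoint (p : R2) r (Phi : R2 -> R2) :
  0 <= r ->
  (forall q, dist2 q p <= r -> dist2 (Phi q) p <= r) ->
  (forall q q', dist2 q p <= r -> dist2 q' p <= r ->
     dist2 (Phi q) (Phi q') <= / 2 * dist2 q q') ->
  exists q, dist2 q p <= r /\ Phi q = q.
Proof.
  intros Hr Hmaps Hcontr.
  pose (u n := Nat.iter n Phi p).
  assert (Hu : forall n, dist2 (u n) p <= r).
  { induction n as [|n IH].
    - change (dist2 p p <= r). rewrite dist2_refl. exact Hr.
    - change (dist2 (Phi (u n)) p <= r). apply Hmaps, IH. }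
  assert (Hstep : forall n, dist2 (u (S n)) (u n) <= dist2 (u 1%nat) (u O) * (/ 2) ^ n).
  { induction n as [|n IH].
    - simpl pow. lra.
    - change (dist2 (Phi (u (S n))) (Phi (u n)) <= dist2 (u 1%nat) (u O) * (/ 2) ^ S n).
      eapply Rle_trans; [apply Hcontr; apply Hu|]. simpl pow. lra. }
  destruct (cauchy2_cv u (geometric_cauchy u _ Hstep)) as [l Hl].
  assert (Hl_box : dist2 l p <= r).
  { apply Rle_plus_epsilon. intros eps He. destruct (Hl eps He) as [N HN].
    specialize (HN N (le_n N)). rewrite dist2_sym in HN.
    pose proof (dist2_triangle l (u N) p). pose proof (Hu N). lra. }
  exists l. split; [exact Hl_box|].
  apply dist2_eq0, Rle_plus_epsilon. intros eps He.
  destruct (Hl (eps / 2) ltac:(lra)) as [N HN].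
  pose proof (HN N (le_n N)). pose proof (HN (S N) ltac:(lia)).
  pose proof (Hcontr l (u N) Hl_box (Hu N)).
  change (Phi (u N)) with (u (S N)) in *.
  pose proof (dist2_triangle (Phi l) (u (S N)) l).
  rewrite (dist2_sym (u N) l) in *.
  lra.
Qed.

Definition C1_on (U : R2 -> Prop) (F : R2 -> R) (F' : bool -> R2 -> R) : Prop :=
  forall a, partial_on U a F (F' a) /\ cont2_on U (F' a).

Definition jacobian (F1' F2' : bool -> R2 -> R) (p : R2) : R :=
  F1' false p * F2' true p - F1' true p * F2' false p.

Lemma jacobian_rows_indep F1' F2' p s t :
  jacobian F1' F2' p <> 0 ->
  s * F1' false p + t * F2' false p = 0 -> s * F1' true p + t * F2' true p = 0 -> s = 0 /\ t = 0.
Proof.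
  intros Hj H1 H2. apply (det2_kernel (F1' false p) (F2' false p) (F1' true p) (F2' true p));
    [unfold jacobian in Hj | ..]; lra.
Qed.

Lemma jacobian_cols_indep F1' F2' p s t :
  jacobian F1' F2' p <> 0 ->
  s * F1' false p + t * F1' true p = 0 -> s * F2' false p + t * F2' true p = 0 -> s = 0 /\ t = 0.
Proof.
  intros Hj H1 H2. apply (det2_kernel (F1' false p) (F1' true p) (F2' false p) (F2' true p));
    [unfold jacobian in Hj | ..]; lra.
Qed.

Lemma C1_box U F1 F2 F1' F2' p eta :
  open2 U -> C1_on U F1 F1' -> C1_on U F2 F2' -> U p -> 0 < eta ->
  exists r, 0 < r /\ (forall z, dist2 z p <= r -> U z) /\
    forall b z, dist2 z p <= r ->
      Rabs (F1' b z - F1' b p) < eta /\ Rabs (F2' b z - F2' b p) < eta.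
Proof.
  intros HU C1 C2 Hp Heta.
  assert (Hnear : forall F F', C1_on U F F' -> exists d, 0 < d /\
            forall b z, U z -> dist2 z p < d -> Rabs (F' b z - F' b p) < eta).
  { intros F F' HF.
    destruct (proj2 (HF false) p Hp eta Heta) as [d0 [Hd0 H0]].
    destruct (proj2 (HF true) p Hp eta Heta) as [d1 [Hd1 H1]].
    exists (Rmin d0 d1). split; [apply Rmin_pos; assumption|].
    pose proof (Rmin_l d0 d1); pose proof (Rmin_r d0 d1).
    intros [|] z Hz Hd; [apply H1 | apply H0]; auto; lra. }
  destruct (HU p Hp) as [d0 [Hd0 H0]].
  destruct (Hnear F1 F1' C1) as [d1 [Hd1 H1]].
  destruct (Hnear F2 F2' C2) as [d2 [Hd2 H2]].
  exists (Rmin d0 (Rmin d1 d2) / 2).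
  pose proof (Rmin_l d0 (Rmin d1 d2)); pose proof (Rmin_r d0 (Rmin d1 d2)).
  pose proof (Rmin_l d1 d2); pose proof (Rmin_r d1 d2).
  pose proof (Rmin_pos d0 (Rmin d1 d2) Hd0 (Rmin_pos d1 d2 Hd1 Hd2)).
  assert (Hball : forall z, dist2 z p <= Rmin d0 (Rmin d1 d2) / 2 -> U z) by (intros; apply H0; lra).
  split; [lra|]. split; [exact Hball|].
  intros b z Hz. split; [apply H1 | apply H2]; auto; lra.
Qed.

(* The [k]-th coordinate of the Newton map [q - A (F q - (x, y))], where [A] is the inverse of
   the Jacobian matrix at [p]: its partials are small near [p], so it is a contraction there. *)
Lemma newton_component_lipschitz U F1 F2 F1' F2' p r eta a1 a2 k x y :
  C1_on U F1 F1' -> C1_on U F2 F2' ->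
  (forall z, dist2 z p <= r -> U z) ->
  (forall b z, dist2 z p <= r ->
     Rabs (F1' b z - F1' b p) < eta /\ Rabs (F2' b z - F2' b p) < eta) ->
  (Rabs a1 + Rabs a2) * eta <= / 4 ->
  (forall b, a1 * F1' b p + a2 * F2' b p = if Bool.eqb b k then 1 else 0) ->
  forall q q', dist2 q p <= r -> dist2 q' p <= r ->
  Rabs ((coord k q' - (a1 * (F1 q' - x) + a2 * (F2 q' - y)))
        - (coord k q - (a1 * (F1 q - x) + a2 * (F2 q - y)))) <= / 2 * dist2 q' q.
Proof.
  intros C1 C2 Hbox Hnear Heta Hinv q q' Hq Hq'.
  replace (/ 2) with (2 * / 4) by field.
  apply (box_lipschitz (fun z => coord k z - (a1 * (F1 z - x) + a2 * (F2 z - y)))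
           (fun b z => (if Bool.eqb b k then 1 else 0) - (a1 * F1' b z + a2 * F2' b z)) p r);
    [| | exact Hq | exact Hq'].
  - intros b z Hz. apply dpl_minus; [apply coord_set_coord_derivable|].
    apply dpl_plus; apply dpl_scal; apply dpl_minus_const;
      [apply (proj1 (C1 b)) | apply (proj1 (C2 b))]; apply Hbox, Hz.
  - intros b z Hz. rewrite <- (Hinv b). destruct (Hnear b z Hz) as [N1 N2].
    replace (a1 * F1' b p + a2 * F2' b p - (a1 * F1' b z + a2 * F2' b z))
      with (a1 * (F1' b p - F1' b z) + a2 * (F2' b p - F2' b z)) by ring.
    rewrite Rabs_minus_sym in N1, N2.
    eapply Rle_trans; [apply Rabs_comb_le; eassumption | exact Heta].
Qed.

Lemma newton_fixpoint U F1 F2 F1' F2' p r eta a11 a12 a21 a22 x y :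
  C1_on U F1 F1' -> C1_on U F2 F2' -> 0 <= r ->
  (forall z, dist2 z p <= r -> U z) ->
  (forall b z, dist2 z p <= r ->
     Rabs (F1' b z - F1' b p) < eta /\ Rabs (F2' b z - F2' b p) < eta) ->
  (Rabs a11 + Rabs a12) * eta <= / 4 -> (Rabs a21 + Rabs a22) * eta <= / 4 ->
  (forall b, a11 * F1' b p + a12 * F2' b p = if Bool.eqb b false then 1 else 0) ->
  (forall b, a21 * F1' b p + a22 * F2' b p = if Bool.eqb b true then 1 else 0) ->
  Rabs (a11 * (x - F1 p) + a12 * (y - F2 p)) <= r / 2 ->
  Rabs (a21 * (x - F1 p) + a22 * (y - F2 p)) <= r / 2 ->
  exists q, dist2 q p <= r /\
    a11 * (F1 q - x) + a12 * (F2 q - y) = 0 /\ a21 * (F1 q - x) + a22 * (F2 q - y) = 0.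
Proof.
  intros C1 C2 Hr Hbox Hnear Heta1 Heta2 Hinv1 Hinv2 Hx Hy.
  pose (Phi q := (fst q - (a11 * (F1 q - x) + a12 * (F2 q - y)),
                  snd q - (a21 * (F1 q - x) + a22 * (F2 q - y)))).
  assert (Hcontr : forall q q', dist2 q p <= r -> dist2 q' p <= r ->
            dist2 (Phi q) (Phi q') <= / 2 * dist2 q q').
  { intros q q' Hq Hq'. apply dist2_le; simpl.
    - exact (newton_component_lipschitz U F1 F2 F1' F2' p r eta a11 a12 false x y
               C1 C2 Hbox Hnear Heta1 Hinv1 q' q Hq' Hq).
    - exact (newton_component_lipschitz U F1 F2 F1' F2' p r eta a21 a22 true x y
               C1 C2 Hbox Hnear Heta2 Hinv2 q' q Hq' Hq). }
  assert (Hcenter : dist2 (Phi p) p <= r / 2).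
  { apply dist2_le; simpl.
    - replace (fst p - (a11 * (F1 p - x) + a12 * (F2 p - y)) - fst p)
        with (a11 * (x - F1 p) + a12 * (y - F2 p)) by ring. exact Hx.
    - replace (snd p - (a21 * (F1 p - x) + a22 * (F2 p - y)) - snd p)
        with (a21 * (x - F1 p) + a22 * (y - F2 p)) by ring. exact Hy. }
  destruct (box_contraction_fixpoint p r Phi) as [q [Hq Hfix]]; [exact Hr | | exact Hcontr |].
  - intros q Hq. pose proof (dist2_triangle (Phi q) (Phi p) p).
    pose proof (Hcontr q p Hq ltac:(rewrite dist2_refl; exact Hr)). lra.
  - exists q. split; [exact Hq|].
    destruct q as [q1 q2]. unfold Phi in Hfix. injection Hfix. simpl. intros E2 E1. lra.
Qed.

Lemma local_onto U F1 F2 F1' F2' p :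
  open2 U -> C1_on U F1 F1' -> C1_on U F2 F2' -> U p -> jacobian F1' F2' p <> 0 ->
  exists e, 0 < e /\ forall x y, Rabs (x - F1 p) < e -> Rabs (y - F2 p) < e ->
    exists q, U q /\ F1 q = x /\ F2 q = y.
Proof.
  intros HU C1 C2 Hp Hj.
  set (J := jacobian F1' F2' p) in Hj.
  set (a11 := F2' true p / J). set (a12 := - F1' true p / J).
  set (a21 := - F2' false p / J). set (a22 := F1' false p / J).
  set (K := Rabs a11 + Rabs a12 + Rabs a21 + Rabs a22).
  assert (HK1 : Rabs a11 + Rabs a12 <= K) by (unfold K; pose proof (Rabs_pos a21); pose proof (Rabs_pos a22); lra).
  assert (HK2 : Rabs a21 + Rabs a22 <= K) by (unfold K; pose proof (Rabs_pos a11); pose proof (Rabs_pos a12); lra).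
  assert (HK : 0 <= K) by (pose proof (Rabs_pos a11); pose proof (Rabs_pos a12); lra).
  set (eta := / (4 * (K + 1))).
  assert (Heta : 0 < eta) by (apply Rinv_0_lt_compat; lra).
  assert (HKeta : K * eta = / 4 - eta) by (unfold eta; field; lra).
  destruct (C1_box U F1 F2 F1' F2' p eta HU C1 C2 Hp Heta) as (r & Hr & Hbox & Hnear).
  set (e := r / (2 * (K + 1))).
  assert (He : 0 < e) by (apply Rdiv_lt_0_compat; lra).
  assert (HKe : K * e = r / 2 - e) by (unfold e; field; lra).
  exists e. split; [exact He|]. intros x y Hx Hy.
  destruct (newton_fixpoint U F1 F2 F1' F2' p r eta a11 a12 a21 a22 x y C1 C2)
    as (q & Hq & E1 & E2); [lra | exact Hbox | exact Hnear | nra | nra | | | | |].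
  - intros []; simpl; unfold a11, a12, J, jacobian in *; field; exact Hj.
  - intros []; simpl; unfold a21, a22, J, jacobian in *; field; exact Hj.
  - pose proof (Rabs_comb_le a11 a12 _ _ e Hx Hy). nra.
  - pose proof (Rabs_comb_le a21 a22 _ _ e Hx Hy). nra.
  - exists q. split; [apply Hbox, Hq|].
    assert (Hdet : a11 * a22 - a12 * a21 <> 0).
    { replace (a11 * a22 - a12 * a21) with (/ J)
        by (unfold a11, a12, a21, a22, J, jacobian in *; field; exact Hj).
      apply Rinv_neq_0_compat, Hj. }
    destruct (det2_kernel a11 a12 a21 a22 _ _ Hdet E1 E2). split; lra.
Qed.

Module Schwarz.
Import Coquelicot.Coquelicot.

Lemma cont2_continuity_2d (U : R2 -> Prop) (G : R2 -> R) (H : R -> R -> R) x0 y0 d0 :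
  cont2_on U G -> U (x0, y0) -> 0 < d0 ->
  (forall u v, Rabs (u - x0) < d0 -> Rabs (v - y0) < d0 -> U (u, v) /\ H u v = G (u, v)) ->
  continuity_2d_pt H x0 y0.
Proof.
  intros HG Hp Hd0 HH eps. destruct (HG (x0, y0) Hp eps (cond_pos eps)) as [d [Hd Hd']].
  assert (Hm : 0 < Rmin d d0) by (apply Rmin_pos; lra).
  exists (mkposreal _ Hm). intros u v hu hv. simpl in hu, hv.
  pose proof (Rmin_l d d0); pose proof (Rmin_r d d0).
  destruct (HH u v) as [Huv E]; [lra | lra |].
  destruct (HH x0 y0) as [_ E0]; [rewrite Rminus_diag, Rabs_R0; lra .. |].
  rewrite E, E0. apply Hd'; [exact Huv | apply dist2_lt; simpl; lra].
Qed.

Lemma partials_commute (U : R2 -> Prop) (F Fu Fv Fuv Fvu : R2 -> R) (p : R2) :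
  open2 U -> U p ->
  partial_on U false F Fu -> partial_on U true F Fv ->
  partial_on U true Fu Fvu -> partial_on U false Fv Fuv ->
  cont2_on U Fvu -> cont2_on U Fuv -> Fvu p = Fuv p.
Proof.
  intros HU Hp Hu Hv Hvu Huv Cvu Cuv. destruct p as [x0 y0].
  destruct (HU _ Hp) as [e [He Hball]].
  assert (He2 : 0 < e / 2) by lra.
  assert (near : forall u v, Rabs (u - x0) < e -> Rabs (v - y0) < e -> U (u, v))
    by (intros; apply Hball, dist2_lt; assumption).
  assert (near2 : forall a b c, Rabs (a - b) < e / 2 -> Rabs (b - c) < e / 2 -> Rabs (a - c) < e).
  { intros a b c Hab Hbc. apply Rabs_def2 in Hab, Hbc. apply Rabs_def1; lra. }
  set (f := fun x y => F (x, y)).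
  assert (Duv : forall u v, Rabs (u - x0) < e / 2 -> Rabs (v - y0) < e / 2 ->
            is_derive (fun z => Derive (fun t => f z t) v) u (Fuv (u, v))).
  { intros u v hu hv. apply (is_derive_ext_loc (fun z => Fv (z, v))).
    - exists (mkposreal _ He2). intros z Hz. change (Rabs (z - u) < e / 2) in Hz.
      symmetry. apply is_derive_unique, is_derive_Reals, (Hv (z, v)), near; [eauto | lra].
    - apply is_derive_Reals, (Huv (u, v)), near; lra. }
  assert (Dvu : forall u v, Rabs (u - x0) < e / 2 -> Rabs (v - y0) < e / 2 ->
            is_derive (fun z => Derive (fun t => f t z) u) v (Fvu (u, v))).
  { intros u v hu hv. apply (is_derive_ext_loc (fun z => Fu (u, z))).
    - exists (mkposreal _ He2). intros z Hz. change (Rabs (z - v) < e / 2) in Hz.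
      symmetry. apply is_derive_unique, is_derive_Reals, (Hu (u, z)), near; [lra | eauto].
    - apply is_derive_Reals, (Hvu (u, v)), near; lra. }
  assert (Hx0 : Rabs (x0 - x0) < e / 2) by (rewrite Rminus_diag, Rabs_R0; lra).
  assert (Hy0 : Rabs (y0 - y0) < e / 2) by (rewrite Rminus_diag, Rabs_R0; lra).
  rewrite <- (is_derive_unique _ _ _ (Dvu x0 y0 Hx0 Hy0)),
          <- (is_derive_unique _ _ _ (Duv x0 y0 Hx0 Hy0)).
  symmetry. apply (Schwarz f x0 y0).
  - exists (mkposreal _ He2). intros u v hu hv. simpl in hu, hv. repeat split.
    + exists (Fu (u, v)). apply is_derive_Reals, (Hu (u, v)), near; lra.
    + exists (Fv (u, v)). apply is_derive_Reals, (Hv (u, v)), near; lra.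
    + exists (Fuv (u, v)). apply Duv; assumption.
    + exists (Fvu (u, v)). apply Dvu; assumption.
  - apply (cont2_continuity_2d U Fuv _ x0 y0 (e / 2) Cuv Hp He2). intros u v hu hv.
    split; [apply near; lra | apply is_derive_unique, Duv; assumption].
  - apply (cont2_continuity_2d U Fvu _ x0 y0 (e / 2) Cvu Hp He2). intros u v hu hv.
    split; [apply near; lra | apply is_derive_unique, Dvu; assumption].
Qed.

End Schwarz.

Lemma cont2_on_plus U f g : cont2_on U f -> cont2_on U g -> cont2_on U (fun q => f q + g q).
Proof.
  intros Hf Hg p Hp e He.
  destruct (Hf p Hp (e / 2) ltac:(lra)) as [d1 [Hd1 H1]].
  destruct (Hg p Hp (e / 2) ltac:(lra)) as [d2 [Hd2 H2]].
  exists (Rmin d1 d2). split; [apply Rmin_pos; assumption|]. intros q Hq Hd.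
  pose proof (Rmin_l d1 d2); pose proof (Rmin_r d1 d2).
  specialize (H1 q Hq ltac:(lra)). specialize (H2 q Hq ltac:(lra)).
  pose proof (Rabs_triang (f q - f p) (g q - g p)).
  replace (f q - f p + (g q - g p)) with (f q + g q - (f p + g p)) in * by ring. lra.
Qed.

Lemma cont2_on_mult U f g : cont2_on U f -> cont2_on U g -> cont2_on U (fun q => f q * g q).
Proof.
  intros Hf Hg p Hp e He.
  set (K := Rabs (f p) + Rabs (g p) + 1).
  pose proof (Rabs_pos (f p)); pose proof (Rabs_pos (g p)).
  set (eta := Rmin 1 (e / K)).
  assert (Heta : 0 < eta) by (apply Rmin_pos; [lra | apply Rdiv_lt_0_compat; unfold K; lra]).
  assert (Heta1 : eta <= 1) by apply Rmin_l.
  assert (HetaK : eta * K <= e).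
  { apply (Rle_trans _ (e / K * K)); [apply Rmult_le_compat_r; [unfold K; lra | apply Rmin_r]|].
    right. field. unfold K; lra. }
  destruct (Hf p Hp eta Heta) as [d1 [Hd1 H1]].
  destruct (Hg p Hp eta Heta) as [d2 [Hd2 H2]].
  exists (Rmin d1 d2). split; [apply Rmin_pos; assumption|]. intros q Hq Hd.
  pose proof (Rmin_l d1 d2); pose proof (Rmin_r d1 d2).
  specialize (H1 q Hq ltac:(lra)). specialize (H2 q Hq ltac:(lra)).
  replace (f q * g q - f p * g p)
    with ((f q - f p) * (g q - g p) + (f p * (g q - g p) + g p * (f q - f p))) by ring.
  pose proof (Rabs_pos (f q - f p)); pose proof (Rabs_pos (g q - g p)).
  eapply Rle_lt_trans; [apply Rabs_triang|]. eapply Rle_lt_trans; [apply Rplus_le_compat_l, Rabs_triang|].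
  rewrite !Rabs_mult. unfold K in HetaK. nra.
Qed.

Definition locally (S : surface) (P : pt S -> Prop) (m : pt S) : Prop :=
  exists i p e, cdom S i p /\ chart S i p = m /\ 0 < e /\
    forall q, dist2 q p < e -> cdom S i q /\ P (chart S i q).

Lemma locally_elim S P m : locally S P m -> P m.
Proof.
  intros (i & p & e & _ & <- & He & HP).
  apply (HP p). rewrite dist2_refl. exact He.
Qed.

(* Pulled back by a transition map, a ball of the defining chart still contains a ball
   around each nearby point. *)
Lemma locally_open S P : sopen S (locally S P).
Proof.
  intros j p' [Hp' (i & p & e & Hp & Hm & He & HP)].
  set (V := fun q => cdom S j q /\ exists r, cdom S i r /\ chart S i r = chart S j q).
  assert (Vp' : V p') by (split; [exact Hp' | exists p; split; assumption]).
  destruct (trans_smooth S j i) as (t1 & t2 & Ht & [D1 [N1 HD1]] & [D2 [N2 HD2]]).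
  destruct (Ht p' Hp' (proj2 Vp')) as [Tp'dom Tp'].
  assert (Tp : (t1 p', t2 p') = p) by (apply (chart_inj S i); congruence).
  destruct (proj2 (proj2 (HD1 nil)) p' Vp' (e / 2) ltac:(lra)) as [d1 [Hd1 K1]].
  destruct (proj2 (proj2 (HD2 nil)) p' Vp' (e / 2) ltac:(lra)) as [d2 [Hd2 K2]].
  destruct (trans_open S j i p' Vp') as [dV [HdV KV]].
  pose proof (Rmin_l dV (Rmin d1 d2)); pose proof (Rmin_r dV (Rmin d1 d2)).
  pose proof (Rmin_l d1 d2); pose proof (Rmin_r d1 d2).
  exists (Rmin dV (Rmin d1 d2)). split; [apply Rmin_pos; [| apply Rmin_pos]; assumption|].
  intros q Hq. assert (Vq : V q) by (apply KV; lra).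
  destruct (Ht q (proj1 Vq) (proj2 Vq)) as [Tqi Tq].
  split; [exact (proj1 Vq)|].
  exists i, (t1 q, t2 q), (e / 2). split; [exact Tqi|]. split; [exact Tq|]. split; [lra|].
  assert (Hclose : dist2 (t1 q, t2 q) p < e / 2).
  { rewrite <- Tp. apply dist2_lt; simpl.
    - rewrite <- (N1 q Vq), <- (N1 p' Vp'). apply K1; [exact Vq | lra].
    - rewrite <- (N2 q Vq), <- (N2 p' Vp'). apply K2; [exact Vq | lra]. }
  intros q' Hq'. apply HP. pose proof (dist2_triangle q' (t1 q, t2 q) p). lra.
Qed.

Lemma locally_and S P Q m :
  locally S P m -> locally S Q m -> locally S (fun m' => P m' /\ Q m') m.
Proof.
  intros (i & p & e & Hp & <- & He & HP) HQ.
  destruct (locally_open S Q i p (conj Hp HQ)) as [e' [He' HQ']].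
  pose proof (Rmin_l e e'); pose proof (Rmin_r e e').
  exists i, p, (Rmin e e'). split; [exact Hp|]. split; [reflexivity|].
  split; [apply Rmin_pos; assumption|].
  intros q Hq. destruct (HP q ltac:(lra)) as [Hq' HPq]. split; [exact Hq'|]. split; [exact HPq|].
  exact (locally_elim S Q _ (proj2 (HQ' q ltac:(lra)))).
Qed.

Lemma connected_locally_unique (S : surface) (T : Type) (Q : T -> pt S -> Prop) :
  connected S ->
  (forall m, exists t, locally S (Q t) m) ->
  (forall t t' m, locally S (Q t) m -> locally S (Q t') m -> t = t') ->
  forall t0 m0, locally S (Q t0) m0 -> forall m, Q t0 m.
Proof.
  intros Hconn Hcover Huniq t0 m0 H0.
  destruct (Hconn (locally S (Q t0)) (fun m => exists t, t <> t0 /\ locally S (Q t) m))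
    as [H | H].
  - apply locally_open.
  - intros i p [Hp (t & Ht & Hl)].
    destruct (locally_open S (Q t) i p (conj Hp Hl)) as [e [He Hball]].
    exists e. split; [exact He|]. intros q Hq. destruct (Hball q Hq) as [Hq' Hl'].
    split; [exact Hq'|]. exists t. split; assumption.
  - intros m. destruct (Hcover m) as [t Ht]. destruct (classic (t = t0)) as [-> | Hne].
    + left. exact Ht.
    + right. exists t. split; assumption.
  - intros m [H1 (t & Ht & H2)]. exact (Ht (Huniq t t0 m H2 H1)).
  - intros m. exact (locally_elim S (Q t0) m (H m)).
  - exfalso. destruct (H m0) as (t & Ht & H1). exact (Ht (Huniq t t0 m0 H1 H0)).
Qed.

Definition deriv_family (U : R2 -> Prop) (D : list bool -> R2 -> R) : Prop :=
  forall l, pd1_on U (D l) (D (false :: l)) /\ pd2_on U (D l) (D (true :: l)) /\ cont2_on U (D l).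

Lemma deriv_family_partial U D a l : deriv_family U D -> partial_on U a (D l) (D (a :: l)).
Proof. intros H [x y] Hp. destruct a; simpl; apply H; exact Hp. Qed.

Lemma deriv_family_derivable U D a l p :
  deriv_family U D -> U p ->
  derivable_pt_lim (fun t => D l (set_coord a p t)) (coord a p) (D (a :: l) p).
Proof. intros H Hp. exact (deriv_family_partial U D a l H p Hp). Qed.

Lemma deriv_family_cont U D l : deriv_family U D -> cont2_on U (D l).
Proof. intros H. apply H. Qed.

Lemma deriv_family_C1 U D l : deriv_family U D -> C1_on U (D l) (fun a => D (a :: l)).
Proof. intros H a. split; [apply deriv_family_partial | apply deriv_family_cont]; exact H. Qed.

Notation grad D := (fun a : bool => D (a :: nil)).

(* Cramer's rule for [dz = P dx + Q dy]: [P] and [Q] are the partial derivatives of [z]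
   as a function of [(x, y)]. *)
Definition dzdx (D1 D2 D3 : list bool -> R2 -> R) (q : R2) : R :=
  jacobian (grad D3) (grad D2) q / jacobian (grad D1) (grad D2) q.

Definition dzdy (D1 D2 D3 : list bool -> R2 -> R) (q : R2) : R :=
  jacobian (grad D1) (grad D3) q / jacobian (grad D1) (grad D2) q.

Lemma grad_z_decomp D1 D2 D3 q b :
  jacobian (grad D1) (grad D2) q <> 0 ->
  D3 (b :: nil) q = dzdx D1 D2 D3 q * D1 (b :: nil) q + dzdy D1 D2 D3 q * D2 (b :: nil) q.
Proof. intros H. unfold dzdx, dzdy, jacobian in *. destruct b; field; exact H. Qed.

Lemma jacobian_ratio_derivable U Da Db Dc Dd p a :
  deriv_family U Da -> deriv_family U Db -> deriv_family U Dc -> deriv_family U Dd -> U p ->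
  jacobian (grad Dc) (grad Dd) p <> 0 ->
  exists l, derivable_pt_lim
    (fun t => jacobian (grad Da) (grad Db) (set_coord a p t)
              / jacobian (grad Dc) (grad Dd) (set_coord a p t)) (coord a p) l.
Proof.
  intros Fa Fb Fc Fd Hp Hj. eexists. unfold jacobian. cbv beta.
  apply dpl_div; [| | cbv beta; rewrite set_coord_id; exact Hj];
    apply dpl_minus; apply dpl_mult; eapply deriv_family_derivable; eassumption.
Qed.

Lemma jacobian_neq0_of_posdef D1 D2 p :
  (forall s t : R, (s, t) <> (0, 0) ->
     0 < s * s * gcoef D1 D2 false false p + 2 * s * t * gcoef D1 D2 false true p
         + t * t * gcoef D1 D2 true true p) ->
  jacobian (grad D1) (grad D2) p <> 0.
Proof.
  intros Hpos Hj.
  pose proof (Hpos 1 0 ltac:(intro E; injection E; lra)) as H1.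
  assert (Hg11 : 0 < gcoef D1 D2 false false p) by lra.
  pose proof (Hpos (gcoef D1 D2 false true p) (- gcoef D1 D2 false false p)
                ltac:(intro E; injection E; lra)) as H2.
  (* Lagrange's identity: [g11 g22 - g12^2] is the squared Jacobian, and the form at
     [(g12, -g11)] equals [g11 (g11 g22 - g12^2)] *)
  assert (Hz : jacobian (grad D1) (grad D2) p ^ 2 = 0) by (rewrite Hj; ring).
  unfold gcoef, jacobian in *. nra.
Qed.

Section ChartCalculus.

Variables (U : R2 -> Prop) (D1 D2 D3 L : list bool -> R2 -> R).
Hypotheses (HU : open2 U) (F1 : deriv_family U D1) (F2 : deriv_family U D2)
  (F3 : deriv_family U D3) (Hjac : forall p, U p -> jacobian (grad D1) (grad D2) p <> 0)
  (Hh : forall p, U p -> forall a b,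
          hcoef_is D1 D2 D3 p a b (L nil p * gcoef D1 D2 a b p)).

Lemma dz_partials p a : U p ->
  derivable_pt_lim (fun t => dzdx D1 D2 D3 (set_coord a p t)) (coord a p) (L nil p * D1 (a :: nil) p) /\
  derivable_pt_lim (fun t => dzdy D1 D2 D3 (set_coord a p t)) (coord a p) (L nil p * D2 (a :: nil) p).
Proof.
  intros Hp.
  destruct (jacobian_ratio_derivable U D3 D2 D1 D2 p a F3 F2 F1 F2 Hp (Hjac p Hp)) as [lP HP].
  destruct (jacobian_ratio_derivable U D1 D3 D1 D2 p a F1 F3 F1 F2 Hp (Hjac p Hp)) as [lQ HQ].
  destruct (open_set_coord_near U a p HU Hp) as [d [Hd Hnear]].
  assert (Hsecond : forall b, D3 (a :: b :: nil) p =
            lP * D1 (b :: nil) p + dzdx D1 D2 D3 p * D1 (a :: b :: nil) p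
            + (lQ * D2 (b :: nil) p + dzdy D1 D2 D3 p * D2 (a :: b :: nil) p)).
  { intros b. apply (uniqueness_limite (fun t => D3 (b :: nil) (set_coord a p t)) (coord a p)).
    - exact (deriv_family_derivable U D3 a (b :: nil) p F3 Hp).
    - apply (dpl_loc_ext (fun t => dzdx D1 D2 D3 (set_coord a p t) * D1 (b :: nil) (set_coord a p t)
                            + dzdy D1 D2 D3 (set_coord a p t) * D2 (b :: nil) (set_coord a p t))).
      + eapply dpl_eq; [apply dpl_plus; apply dpl_mult;
          [exact HP | exact (deriv_family_derivable U D1 a (b :: nil) p F1 Hp)
          | exact HQ | exact (deriv_family_derivable U D2 a (b :: nil) p F2 Hp)] |].
        cbv beta. rewrite set_coord_id. reflexivity.
      + exists d. split; [exact Hd|]. intros t Ht. symmetry. apply grad_z_decomp, Hjac, Hnear, Ht. }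
  assert (Hkernel : forall b, (lP - L nil p * D1 (a :: nil) p) * D1 (b :: nil) p
                              + (lQ - L nil p * D2 (a :: nil) p) * D2 (b :: nil) p = 0).
  { intros b. specialize (Hsecond b). destruct (Hh p Hp a b) as (c1 & c2 & E1 & E2 & E3).
    rewrite E1, E2, E3, (grad_z_decomp D1 D2 D3 p false), (grad_z_decomp D1 D2 D3 p true)
      in Hsecond by (apply Hjac, Hp).
    unfold gcoef in Hsecond. lra. }
  destruct (jacobian_rows_indep (grad D1) (grad D2) p _ _ (Hjac p Hp) (Hkernel false) (Hkernel true)).
  split; eapply dpl_eq; [exact HP | lra | exact HQ | lra].
Qed.

Hypothesis FL : deriv_family U L.

(* Symmetry of the mixed partials of [P] (resp. [Q]) gives [dlam /\ dx = 0] (resp. [dy]). *)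
Lemma lam_wedge_zero (Dk : list bool -> R2 -> R) (Pk : R2 -> R) p :
  deriv_family U Dk -> (forall a, partial_on U a Pk (fun q => L nil q * Dk (a :: nil) q)) -> U p ->
  L (true :: nil) p * Dk (false :: nil) p = L (false :: nil) p * Dk (true :: nil) p.
Proof.
  intros Fk HPk Hp.
  assert (HP := Schwarz.partials_commute U Pk _ _
    (fun q => L (false :: nil) q * Dk (true :: nil) q + L nil q * Dk (false :: true :: nil) q)
    (fun q => L (true :: nil) q * Dk (false :: nil) q + L nil q * Dk (true :: false :: nil) q)
    p HU Hp (HPk false) (HPk true)
    (partial_on_mult U true _ _ _ _ (deriv_family_partial U L true nil FL)
                                    (deriv_family_partial U Dk true _ Fk))
    (partial_on_mult U false _ _ _ _ (deriv_family_partial U L false nil FL)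
                                     (deriv_family_partial U Dk false _ Fk))
    (cont2_on_plus _ _ _ (cont2_on_mult _ _ _ (deriv_family_cont _ _ _ FL) (deriv_family_cont _ _ _ Fk))
                         (cont2_on_mult _ _ _ (deriv_family_cont _ _ _ FL) (deriv_family_cont _ _ _ Fk)))
    (cont2_on_plus _ _ _ (cont2_on_mult _ _ _ (deriv_family_cont _ _ _ FL) (deriv_family_cont _ _ _ Fk))
                         (cont2_on_mult _ _ _ (deriv_family_cont _ _ _ FL) (deriv_family_cont _ _ _ Fk)))).
  assert (HD := Schwarz.partials_commute U (Dk nil) _ _ _ _ p HU Hp
    (deriv_family_partial U Dk false nil Fk) (deriv_family_partial U Dk true nil Fk)
    (deriv_family_partial U Dk true _ Fk) (deriv_family_partial U Dk false _ Fk)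
    (deriv_family_cont _ _ _ Fk) (deriv_family_cont _ _ _ Fk)).
  cbv beta in HP. rewrite HD in HP. lra.
Qed.

Lemma lam_grad_zero p a : U p -> L (a :: nil) p = 0.
Proof.
  intros Hp.
  pose proof (lam_wedge_zero D1 (dzdx D1 D2 D3) p F1 (fun a q Hq => proj1 (dz_partials q a Hq)) Hp).
  pose proof (lam_wedge_zero D2 (dzdy D1 D2 D3) p F2 (fun a q Hq => proj2 (dz_partials q a Hq)) Hp).
  destruct (jacobian_cols_indep (grad D1) (grad D2) p (L (true :: nil) p) (- L (false :: nil) p)
              (Hjac p Hp)); [lra | lra |].
  destruct a; lra.
Qed.


Section ConstantLam.

Variable c : R.
Hypothesis Hc : forall p, U p -> L nil p = c.

Lemma slope_minus_linear_const (Dk : list bool -> R2 -> R) (Pk : R2 -> R) p e :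
  deriv_family U Dk -> (forall a, partial_on U a Pk (fun q => L nil q * Dk (a :: nil) q)) ->
  (forall q, dist2 q p < e -> U q) ->
  forall q, dist2 q p < e -> Pk q - c * Dk nil q = Pk p - c * Dk nil p.
Proof.
  intros Fk HPk Hball.
  apply (const_of_partials_zero (fun q => Pk q - c * Dk nil q)). intros a z Hz.
  pose proof (Hball z Hz) as Hz'.
  eapply dpl_eq; [apply dpl_minus;
    [exact (HPk a z Hz') | apply dpl_scal, (deriv_family_derivable U Dk a nil z Fk Hz')] |].
  rewrite Hc by exact Hz'. ring.
Qed.

Lemma local_paraboloid p : U p -> exists A B C e, 0 < e /\ forall q, dist2 q p < e -> U q /\
  D3 nil q = c / 2 * (D1 nil q ^ 2 + D2 nil q ^ 2) + A * D1 nil q + B * D2 nil q + C.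
Proof.
  intros Hp. destruct (HU p Hp) as [e [He Hball]].
  set (A := dzdx D1 D2 D3 p - c * D1 nil p). set (B := dzdy D1 D2 D3 p - c * D2 nil p).
  pose proof (slope_minus_linear_const D1 (dzdx D1 D2 D3) p e F1
                (fun a q Hq => proj1 (dz_partials q a Hq)) Hball) as HA.
  pose proof (slope_minus_linear_const D2 (dzdy D1 D2 D3) p e F2
                (fun a q Hq => proj2 (dz_partials q a Hq)) Hball) as HB.
  set (phi := fun q => D3 nil q - (c / 2 * (D1 nil q * D1 nil q + D2 nil q * D2 nil q)
                                   + A * D1 nil q + B * D2 nil q)).
  assert (Hphi : forall q, dist2 q p < e -> phi q = phi p).
  { apply const_of_partials_zero. intros a z Hz. pose proof (Hball z Hz) as Hz'.
    eapply dpl_eq.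
    - unfold phi. apply dpl_minus; [eapply deriv_family_derivable; eassumption|].
      apply dpl_plus; [apply dpl_plus|]; apply dpl_scal;
        [apply dpl_plus; apply dpl_mult | ..]; eapply deriv_family_derivable; eassumption.
    - cbv beta. rewrite !set_coord_id, (grad_z_decomp D1 D2 D3 z a (Hjac z Hz')).
      replace (dzdx D1 D2 D3 z) with (A + c * D1 nil z) by (specialize (HA z Hz); unfold A; lra).
      replace (dzdy D1 D2 D3 z) with (B + c * D2 nil z) by (specialize (HB z Hz); unfold B; lra).
      field. }
  exists A, B, (phi p), e. split; [exact He|]. intros q Hq. split; [apply Hball, Hq|].
  specialize (Hphi q Hq). unfold phi in Hphi at 1. lra.
Qed.

End ConstantLam.

End ChartCalculus.

Definition on_paraboloid (c : R) (t : R * R * R) (q : R3) : Prop :=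
  let '(A, B, C) := t in paraboloid c A B C q.

Definition xy_locally_onto (S : surface) (F : pt S -> R3) : Prop :=
  forall m, exists e, 0 < e /\ forall x y, Rabs (x - x3 (F m)) < e -> Rabs (y - y3 (F m)) < e ->
    exists m', x3 (F m') = x /\ y3 (F m') = y.

Section Immersion.

Variables (S : surface) (f : pt S -> R3) (lam : pt S -> R).
Hypotheses (ND : nondeg_immersion S f) (SM : smoothM S lam) (HE : h_eq_lam_g S f lam).

Lemma lam_nonzero_somewhere : ~ d_totally_geodesic S f -> exists m, lam m <> 0.
Proof.
  intros Hntg. apply NNPP. intros Hzero. apply Hntg. intros i D1 D2 D3 CD p Hp a b.
  assert (H0 : lam (chart S i p) = 0) by (apply NNPP; intros Hnz; apply Hzero; eauto).
  pose proof (HE i D1 D2 D3 CD p Hp a b) as H. rewrite H0, Rmult_0_l in H. exact H.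
Qed.

Lemma chart_setup i : exists D1 D2 D3 L,
  chart_derivs S f i D1 D2 D3 /\ derivs (cdom S i) (fun p => lam (chart S i p)) L /\
  (forall p, cdom S i p -> jacobian (grad D1) (grad D2) p <> 0) /\
  (forall p, cdom S i p -> forall a b, hcoef_is D1 D2 D3 p a b (L nil p * gcoef D1 D2 a b p)).
Proof.
  destruct (proj1 ND i) as (D1 & D2 & D3 & CD). destruct (SM i) as [L [NL FL]].
  exists D1, D2, D3, L. split; [exact CD|]. split; [split; assumption|]. split.
  - intros p Hp. apply jacobian_neq0_of_posdef. intros s t Hst. exact (proj2 (proj2 ND i D1 D2 D3 CD p Hp s t Hst)).
  - intros p Hp a b. rewrite (NL p Hp). apply HE; assumption.
Qed.

Lemma lam_locally_const m : locally S (fun m' => lam m' = lam m) m.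
Proof.
  destruct (chart_cover S m) as (i & p & Hp & <-).
  destruct (chart_setup i) as (D1 & D2 & D3 & L & [[_ F1] [[_ F2] [_ F3]]] & [NL FL] & Hjac & Hh).
  destruct (cdom_open S i p Hp) as [e [He Hball]].
  exists i, p, e. split; [exact Hp|]. split; [reflexivity|]. split; [exact He|].
  intros q Hq. split; [apply Hball, Hq|].
  rewrite <- (NL q (Hball q Hq)), <- (NL p Hp).
  apply (const_of_partials_zero (L nil) p e); [|exact Hq]. intros a z Hz.
  pose proof (deriv_family_derivable _ L a nil z FL (Hball z Hz)) as D.
  rewrite (lam_grad_zero (cdom S i) D1 D2 D3 L (cdom_open S i) F1 F2 F3 Hjac Hh FL z a (Hball z Hz)) in D.
  exact D.
Qed.

Lemma paraboloid_locally c :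
  (forall m, lam m = c) -> forall m, exists t, locally S (fun m' => on_paraboloid c t (f m')) m.
Proof.
  intros Hc m. destruct (chart_cover S m) as (i & p & Hp & <-).
  destruct (chart_setup i) as (D1 & D2 & D3 & L & [[N1 F1] [[N2 F2] [N3 F3]]] & [NL FL] & Hjac & Hh).
  destruct (local_paraboloid (cdom S i) D1 D2 D3 L (cdom_open S i) F1 F2 F3 Hjac Hh c
              (fun q Hq => eq_trans (NL q Hq) (Hc _)) p Hp) as (A & B & C & e & He & H).
  exists (A, B, C), i, p, e. split; [exact Hp|]. split; [reflexivity|]. split; [exact He|].
  intros q Hq. destruct (H q Hq) as [Hq' E]. split; [exact Hq'|].
  unfold on_paraboloid, paraboloid. rewrite <- (N1 q Hq'), <- (N2 q Hq'), <- (N3 q Hq'). exact E.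
Qed.

Lemma paraboloid_locally_unique c t t' m :
  locally S (fun m' => on_paraboloid c t (f m')) m ->
  locally S (fun m' => on_paraboloid c t' (f m')) m -> t = t'.
Proof.
  destruct t as [[A B] C], t' as [[A' B'] C']. intros H H'.
  destruct (locally_and S _ _ m H H') as (i & p & e & Hp & _ & He & Hball).
  destruct (chart_setup i) as (D1 & D2 & D3 & L & [[N1 F1] [[N2 F2] _]] & _ & Hjac & _).
  set (psi := fun q => (A - A') * D1 nil q + (B - B') * D2 nil q + (C - C')).
  assert (Hpsi : forall q, dist2 q p < e -> psi q = 0).
  { intros q Hq. destruct (Hball q Hq) as [Hq' [P1 P2]].
    unfold on_paraboloid, paraboloid in P1, P2. unfold psi. rewrite (N1 q Hq'), (N2 q Hq'). lra. }
  assert (Hgrad : forall a, (A - A') * D1 (a :: nil) p + (B - B') * D2 (a :: nil) p = 0).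
  { intros a. apply (uniqueness_limite (fun t => psi (set_coord a p t)) (coord a p)).
    - unfold psi. eapply dpl_eq; [apply dpl_plus; [apply dpl_plus; apply dpl_scal | apply dpl_const]|];
        [exact (deriv_family_derivable _ D1 a nil p F1 Hp)
        | exact (deriv_family_derivable _ D2 a nil p F2 Hp) | ring].
    - apply (dpl_loc_ext (fun _ => 0)); [apply dpl_const|].
      exists e. split; [exact He|]. intros s Hs. symmetry. apply Hpsi. rewrite dist2_set_coord. exact Hs. }
  destruct (jacobian_rows_indep (grad D1) (grad D2) p _ _ (Hjac p Hp) (Hgrad false) (Hgrad true)) as [EA EB].
  assert (EC : psi p = 0) by (apply Hpsi; rewrite dist2_refl; exact He).
  unfold psi in EC. rewrite EA, EB in EC. f_equal; [f_equal|]; lra.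
Qed.

Lemma xy_locally_onto_image : xy_locally_onto S f.
Proof.
  intros m. destruct (chart_cover S m) as (i & p & Hp & <-).
  destruct (chart_setup i) as (D1 & D2 & D3 & L & [[N1 F1] [[N2 F2] _]] & _ & Hjac & _).
  destruct (local_onto (cdom S i) (D1 nil) (D2 nil) (grad D1) (grad D2) p (cdom_open S i)
              (deriv_family_C1 _ D1 nil F1) (deriv_family_C1 _ D2 nil F2) Hp (Hjac p Hp))
    as [e [He H]].
  exists e. split; [exact He|]. intros x y Hx Hy.
  rewrite <- (N1 p Hp) in Hx. rewrite <- (N2 p Hp) in Hy.
  destruct (H x y Hx Hy) as (q & Hq & Ex & Ey).
  exists (chart S i q). rewrite <- (N1 q Hq), <- (N2 q Hq). split; assumption.
Qed.

End Immersion.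

Lemma dist3_x p q : Rabs (x3 p - x3 q) <= dist3 p q.
Proof. apply Rmax_l. Qed.

Lemma dist3_y p q : Rabs (y3 p - y3 q) <= dist3 p q.
Proof. eapply Rle_trans; [apply Rmax_l | apply Rmax_r]. Qed.

Lemma image_open_in_graph (S : surface) (P : R3 -> Prop) (F : pt S -> R3) :
  (forall q q', P q -> P q' -> x3 q = x3 q' -> y3 q = y3 q' -> q = q') ->
  (forall m, P (F m)) -> xy_locally_onto S F -> image_open_in S P F.
Proof.
  intros Hgraph HP Honto. split; [exact HP|]. intros m.
  destruct (Honto m) as [e [He H]]. exists e. split; [exact He|]. intros q Pq Hq.
  destruct (H (x3 q) (y3 q)) as [m' [Ex Ey]].
  - eapply Rle_lt_trans; [apply dist3_x | exact Hq].
  - eapply Rle_lt_trans; [apply dist3_y | exact Hq].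
  - exists m'. apply Hgraph; auto.
Qed.

Lemma xy_locally_onto_translate (S : surface) (F G : pt S -> R3) a b :
  xy_locally_onto S F -> (forall m, x3 (G m) = x3 (F m) + a /\ y3 (G m) = y3 (F m) + b) ->
  xy_locally_onto S G.
Proof.
  intros HF HG m. destruct (HF m) as [e [He H]]. exists e. split; [exact He|].
  intros x y Hx Hy. destruct (HG m) as [Gx Gy]. rewrite Gx in Hx. rewrite Gy in Hy.
  destruct (H (x - a) (y - b)) as [m' [Ex Ey]].
  - replace (x - a - x3 (F m)) with (x - (x3 (F m) + a)) by ring. exact Hx.
  - replace (y - b - y3 (F m)) with (y - (y3 (F m) + b)) by ring. exact Hy.
  - exists m'. destruct (HG m') as [Gx' Gy']. split; lra.
Qed.

Lemma paraboloid_graph c A B C q q' :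
  paraboloid c A B C q -> paraboloid c A B C q' -> x3 q = x3 q' -> y3 q = y3 q' -> q = q'.
Proof.
  destruct q as [x y z], q' as [x' y' z']. unfold paraboloid. simpl.
  intros Hz Hz' <- <-. f_equal. lra.
Qed.

Lemma std_paraboloid_graph q q' :
  std_paraboloid q -> std_paraboloid q' -> x3 q = x3 q' -> y3 q = y3 q' -> q = q'.
Proof.
  destruct q as [x y z], q' as [x' y' z']. unfold std_paraboloid. simpl.
  intros Hz Hz' <- <-. f_equal. lra.
Qed.

(* Completing the square: with [u = x + A/c], [v = y + B/c] the paraboloid reads
   [u^2 + v^2 = 2/c (z - C) + (A/c)^2 + (B/c)^2]. *)
Definition normalize_paraboloid (c A B C : R) (q : R3) : R3 :=
  mk3 (x3 q + A / c) (y3 q + B / c) (2 / c * (z3 q - C) + ((A / c) ^ 2 + (B / c) ^ 2)).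

Lemma normalize_paraboloid_isometry c A B C :
  c <> 0 -> affine_isometry (normalize_paraboloid c A B C).
Proof.
  intros Hc.
  exists 1, 0, 0, 1, 0, 0, (2 / c), (A / c), (B / c), (- (2 / c) * C + ((A / c) ^ 2 + (B / c) ^ 2)).
  split; [ring|]. split; [ring|]. split; [ring|]. split.
  - unfold Rdiv. apply Rmult_integral_contrapositive_currified; [lra | apply Rinv_neq_0_compat, Hc].
  - intros p. unfold normalize_paraboloid. f_equal; ring.
Qed.

Lemma normalize_paraboloid_std c A B C q :
  c <> 0 -> paraboloid c A B C q -> std_paraboloid (normalize_paraboloid c A B C q).
Proof.
  intros Hc Hq. unfold std_paraboloid, paraboloid, normalize_paraboloid in *. simpl.
  rewrite Hq. field. exact Hc.
Qed.

Theorem mainTheorem2 (S : surface) (f : pt S -> R3) (lam : pt S -> R) :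
  connected S ->
  nondeg_immersion S f ->
  smoothM S lam ->
  h_eq_lam_g S f lam ->
  ~ d_totally_geodesic S f ->
  exists c : R, c <> 0 /\ (forall m, lam m = c) /\
    (exists A B C : R, image_open_in S (paraboloid c A B C) f) /\
    (exists T : R3 -> R3, affine_isometry T /\
       image_open_in S std_paraboloid (fun m => T (f m))).
Proof.
  intros Hconn ND SM HE Hntg.
  destruct (lam_nonzero_somewhere S f lam HE Hntg) as [m0 Hm0].
  assert (Hc : forall m, lam m = lam m0).
  { apply (connected_locally_unique S R (fun c m => lam m = c) Hconn) with (m0 := m0).
    - intros m. exists (lam m). exact (lam_locally_const S f lam ND SM HE m).
    - intros c c' m H H'. apply locally_elim in H, H'. congruence.
    - exact (lam_locally_const S f lam ND SM HE m0). }
  set (c := lam m0) in *.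
  destruct (paraboloid_locally S f lam ND SM HE c Hc m0) as [[[A B] C] H0].
  pose proof (connected_locally_unique S _ (fun t m => on_paraboloid c t (f m)) Hconn
                (paraboloid_locally S f lam ND SM HE c Hc)
                (paraboloid_locally_unique S f lam ND SM HE c) _ m0 H0) as Hpar.
  pose proof (xy_locally_onto_image S f lam ND SM HE) as Honto.
  exists c. split; [exact Hm0|]. split; [exact Hc|]. split.
  - exists A, B, C. apply image_open_in_graph; [apply paraboloid_graph | exact Hpar | exact Honto].
  - exists (normalize_paraboloid c A B C). split; [apply normalize_paraboloid_isometry, Hm0|].
    apply image_open_in_graph; [apply std_paraboloid_graph | |].
    + intros m. apply normalize_paraboloid_std; [exact Hm0 | exact (Hpar m)].
    + apply (xy_locally_onto_translate S f _ (A / c) (B / c) Honto). intros m. split; reflexivity.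
Qed.
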